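(* In the cell FDE setting described in the context, assume (H1), (H2), (H3), that there exists $(\varphi,\psi)\in X_+$ with $\min\{\varphi(0),\psi(0)\}>0$, that $q(0)>0$, that $j(0)=0$, and that there exists $K$ such that $j(\varphi,0)>0$ whenever $(\varphi,\psi)\in U_+$ and $\min_{[-h,0]}\varphi\ge K$. Let $\rho_1(\varphi,\psi):=\varphi(0)$ and $\rho_m(\varphi,\psi):=\min\{\varphi(0),\psi(0)\}$ on $X_+$, and for a function $\rho$ on $X_+$ let $X_0^\rho:=\{\phi\in X_+:\ \rho(S_+(t,\phi))=0\ \text{for all } t\ge0\}$. Then $X_0^{\rho_1}=X_0^{\rho_m}=\{(\varphi,\psi)\in X_+:\ \varphi(0)=0\}$.
   Context: Let $h>0$, $R_-<0$, $I:=(R_-,\infty)$. $\|\phi\|_0:=\max_{\theta\in[-h,0]}|\phi(\theta)|$, $\|\phi\|_1:=\|\phi\|_0+\|\phi'\|_0$; $x_t(s):=x(t+s)$, $s\in[-h,0]$. Let $U:=C^1([-h,0],\mathbb R)\times C^1([-h,0],I)$, $U_+:=C^1([-h,0],[0,\infty)^2)$, $q:I\to\mathbb R$, $j:U\to\mathbb R$, $\mu\ge0$. Cell FDE: $w'(t)=q(v(t))w(t)$, $v'(t)=j(w_t,v_t)-\mu v(t)$, $t>0$, $(w_0,v_0)=(\varphi,\psi)$. $F(\varphi,\psi):=(q(\psi(0))\varphi(0),j(\varphi,\psi)-\mu\psi(0))$, $X:=\{\phi\in U:\phi'(0)=F(\phi)\}$, $X_+:=X\cap U_+$. Solutions are $C^1$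 maps $x=(w,v)$ on $[-h,t_* )$ with $x_0=\phi$, $x_t\in U$, satisfying the equations on $(0,t_* )$. (S): $f$ is $C^1$, each $Df(\phi)$ extends to a linear map on $C([-h,0],\mathbb R^n)$ and $(\phi,\chi)\mapsto D_ef(\phi)\chi$ is continuous. (sLb) on $\mathcal O_+$: for each $\|\cdot\|_1$-bounded $B\subset\mathcal O_+$ there is $L_B$ with $|f(\phi)-f(\chi)|\le L_B\|\phi-\chi\|_0$ on $B$. (H1): $j$ satisfies (S) on $U$, (sLb) on $U_+$, $j\ge0$ on $U_+$, and $j(B_1\times B_2)$ is bounded whenever $B_1\times B_2\subset U_+$ with $B_1$ bounded. (H2): $q$ bounded and $C^1$. (H3): $X_+\neq\emptyset$. Under (H1)-(H3) each $\phi\in X_+$ has a unique solution $x^\phi$ on $[-h,\infty)$ with segments in $X_+$ and $S_+(t,\phi):=x^\phi_t$ is a continuous semiflow on $X_+$. *)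

From Stdlib Require Import Reals ClassicalEpsilon.
Open Scope R_scope.

(* Real functions; elements of C([-h,0],R) are represented by functions
   R -> R of which only the values on [-h,0] matter. *)
Definition fn := R -> R.
(* elements of C([-h,0],R^2) = pairs (phi, psi) *)
Definition pt := (fn * fn)%type.

Definition Icl (h s : R) : Prop := -h <= s <= 0.

Definition contw (D : R -> Prop) (f : fn) (s : R) : Prop :=
  forall eps, 0 < eps -> exists d, 0 < d /\
    forall y, D y -> Rabs (y - s) < d -> Rabs (f y - f s) < eps.

Definition derw (D : R -> Prop) (f : fn) (s l : R) : Prop :=
  forall eps, 0 < eps -> exists d, 0 < d /\
    forall y, D y -> y <> s -> Rabs (y - s) < d ->
      Rabs ((f y - f s) / (y - s) - l) < eps.

Definition C1with (D : R -> Prop) (f f' : fn) : Prop :=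
  (forall s, D s -> derw D f s (f' s)) /\ (forall s, D s -> contw D f' s).

Definition C1 (h : R) (f : fn) : Prop := exists f', C1with (Icl h) f f'.
Definition C0 (h : R) (f : fn) : Prop := forall s, Icl h s -> contw (Icl h) f s.

(* the derivative of f on [-h,0] (unique when h > 0 and f is C^1) *)
Definition dv (h : R) (f : fn) : fn :=
  fun s => epsilon (inhabits 0) (derw (Icl h) f s).

Definition nrm0 (h : R) (f : fn) : R :=
  epsilon (inhabits 0) (fun m =>
    (exists s, Icl h s /\ m = Rabs (f s)) /\
    (forall s, Icl h s -> Rabs (f s) <= m)).

(* on R^2 we use the max norm |(a,b)| = max(|a|,|b|) *)
Definition nrm0p (h : R) (p : pt) : R := Rmax (nrm0 h (fst p)) (nrm0 h (snd p)).
Definition dvp (h : R) (p : pt) : pt := (dv h (fst p), dv h (snd p)).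
Definition nrm1p (h : R) (p : pt) : R := nrm0p h p + nrm0p h (dvp h p).
Definition nrm1 (h : R) (f : fn) : R := nrm0 h f + nrm0 h (dv h f).

Definition padd (p r : pt) : pt := (fun s => fst p s + fst r s, fun s => snd p s + snd r s).
Definition psub (p r : pt) : pt := (fun s => fst p s - fst r s, fun s => snd p s - snd r s).
Definition pscal (c : R) (p : pt) : pt := (fun s => c * fst p s, fun s => c * snd p s).
Definition pzero : pt := (fun _ => 0, fun _ => 0).

Definition C1p (h : R) (p : pt) : Prop := C1 h (fst p) /\ C1 h (snd p).
Definition C0p (h : R) (p : pt) : Prop := C0 h (fst p) /\ C0 h (snd p).

Definition U (h Rm : R) (p : pt) : Prop :=
  C1p h p /\ forall s, Icl h s -> Rm < snd p s.
Definition Uplus (h : R) (p : pt) : Prop :=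
  C1p h p /\ forall s, Icl h s -> 0 <= fst p s /\ 0 <= snd p s.

Definition respects (h : R) (f : pt -> R) : Prop :=
  forall p r, (forall s, Icl h s -> fst p s = fst r s /\ snd p s = snd r s) ->
    f p = f r.

Definition linear_on (P : pt -> Prop) (L : pt -> R) : Prop :=
  (forall a b, P a -> P b -> L (padd a b) = L a + L b) /\
  (forall c a, P a -> L (pscal c a) = c * L a).

Definition condS (h Rm : R) (f : pt -> R) : Prop :=
  exists Df : pt -> pt -> R,
    (forall p, U h Rm p -> linear_on (C1p h) (Df p) /\
       exists c, forall x, C1p h x -> Rabs (Df p x) <= c * nrm1p h x) /\
    (forall p, U h Rm p -> forall eps, 0 < eps -> exists d, 0 < d /\
       forall x, C1p h x -> U h Rm (padd p x) -> nrm1p h x < d ->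
         Rabs (f (padd p x) - f p - Df p x) <= eps * nrm1p h x) /\
    (forall p, U h Rm p -> forall eps, 0 < eps -> exists d, 0 < d /\
       forall r, U h Rm r -> nrm1p h (psub r p) < d ->
         forall x, C1p h x -> Rabs (Df r x - Df p x) <= eps * nrm1p h x) /\
    exists De : pt -> pt -> R,
      (forall p, U h Rm p -> linear_on (C0p h) (De p) /\
         forall x, C1p h x -> De p x = Df p x) /\
      (forall p x, U h Rm p -> C0p h x -> forall eps, 0 < eps ->
         exists d, 0 < d /\ forall p' x', U h Rm p' -> C0p h x' ->
           nrm1p h (psub p' p) < d -> nrm0p h (psub x' x) < d ->
           Rabs (De p' x' - De p x) < eps).

Definition sLb (h : R) (f : pt -> R) : Prop :=
  forall B : pt -> Prop, (forall p, B p -> Uplus h p) ->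
    (exists M, forall p, B p -> nrm1p h p <= M) ->
    exists L, forall p r, B p -> B r -> Rabs (f p - f r) <= L * nrm0p h (psub p r).

Definition H1 (h Rm : R) (j : pt -> R) : Prop :=
  respects h j /\ condS h Rm j /\ sLb h j /\
  (forall p, Uplus h p -> 0 <= j p) /\
  (forall B1 B2 : fn -> Prop,
     (forall a b, B1 a -> B2 b -> Uplus h (a, b)) ->
     (exists M, forall a, B1 a -> nrm1 h a <= M) ->
     exists M', forall a b, B1 a -> B2 b -> Rabs (j (a, b)) <= M').

Definition H2 (Rm : R) (q : R -> R) : Prop :=
  (exists M, forall x, Rm < x -> Rabs (q x) <= M) /\
  exists q' : R -> R,
    (forall x, Rm < x -> derivable_pt_lim q x (q' x)) /\
    (forall x, Rm < x -> contw (fun y => Rm < y) q' x).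

Definition X (h Rm : R) (q : R -> R) (j : pt -> R) (mu : R) (p : pt) : Prop :=
  U h Rm p /\
  dv h (fst p) 0 = q (snd p 0) * fst p 0 /\
  dv h (snd p) 0 = j p - mu * snd p 0.
Definition Xplus h Rm q j mu (p : pt) : Prop := X h Rm q j mu p /\ Uplus h p.

Definition seg (x : pt) (t : R) : pt := (fun s => fst x (t + s), fun s => snd x (t + s)).

Definition is_solution h Rm q j mu (phi : pt) (x : pt) : Prop :=
  (forall s, Icl h s -> fst x s = fst phi s /\ snd x s = snd phi s) /\
  (exists w' v',
     C1with (fun s => -h <= s) (fst x) w' /\
     C1with (fun s => -h <= s) (snd x) v' /\
     forall t, 0 < t ->
       w' t = q (snd x t) * fst x t /\
       v' t = j (seg x t) - mu * snd x t) /\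
  (forall t, 0 <= t -> U h Rm (seg x t)).

Definition is_semiflow h Rm q j mu (S : R -> pt -> pt) : Prop :=
  forall phi, Xplus h Rm q j mu phi ->
    exists x, is_solution h Rm q j mu phi x /\
      (forall t, 0 <= t -> Xplus h Rm q j mu (seg x t)) /\
      (forall t, 0 <= t -> S t phi = seg x t).

Definition rho1 (p : pt) : R := fst p 0.
Definition rhom (p : pt) : R := Rmin (fst p 0) (snd p 0).

Definition X0 h Rm q j mu (S : R -> pt -> pt) (rho : pt -> R) (p : pt) : Prop :=
  Xplus h Rm q j mu p /\ forall t, 0 <= t -> rho (S t p) = 0.

(* Along a solution (w, v), w' = q(v) w with q bounded, so by Gronwall w(0) = 0 forces w = 0
   for all times, while w(0) > 0 keeps w positive.  If moreover min{w, v} vanished for all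
   times, then v = 0, hence j(x_t) = v'(t) + mu v(t) = 0 for t > 0, while w' = q(0) w makes w
   grow exponentially; once w >= K on a whole delay interval, the hypothesis on K gives j(w_t, 0) > 0. *)
From Stdlib Require Import Reals.
From Stdlib Require Import Lra Psatz.
Open Scope R_scope.

Lemma derw_derivable_pt_lim (a : R) (f : fn) (s l : R) :
  a < s -> derw (fun y => a <= y) f s l -> derivable_pt_lim f s l.
Proof.
  intros Has Hd eps Heps.
  destruct (Hd eps Heps) as [d [Hd0 Hd1]].
  assert (Hpos : 0 < Rmin d (s - a)) by (apply Rmin_pos; lra).
  exists (mkposreal _ Hpos); simpl; intros k Hk0 Hk.
  pose proof (Rmin_l d (s - a)); pose proof (Rmin_r d (s - a)).
  apply Rabs_def2 in Hk.
  specialize (Hd1 (s + k)); replace (s + k - s) with k in Hd1 by ring.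
  apply Hd1; [lra | intro; apply Hk0; lra | apply Rabs_def1; lra].
Qed.

Lemma C1with_derivable_pt_lim (h : R) (f f' : fn) (t : R) :
  C1with (fun s => -h <= s) f f' -> -h < t -> derivable_pt_lim f t (f' t).
Proof.
  intros [Hd _] Ht.
  apply (derw_derivable_pt_lim (-h)); [exact Ht | apply Hd; lra].
Qed.

Lemma le_of_derive_nonneg (f f' : R -> R) (a b : R) :
  a <= b -> (forall c, a <= c <= b -> derivable_pt_lim f c (f' c)) ->
  (forall c, a < c < b -> 0 <= f' c) -> f a <= f b.
Proof.
  intros Hab Hd Hpos.
  destruct (Req_dec a b) as [<- | Hne]; [lra |].
  destruct (MVT_cor2 f f' a b) as [c [Hc Hcab]]; [lra | exact Hd |].
  pose proof (Hpos c Hcab); nra.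
Qed.

Lemma derivable_pt_lim_exp_mul (c : R) (w : R -> R) (t l : R) :
  derivable_pt_lim w t l ->
  derivable_pt_lim (fun u => exp (c * u) * w u) t (exp (c * t) * (c * w t + l)).
Proof.
  intros Hw.
  assert (Hlin : derivable_pt_lim (fun u => c * u) t c).
  { pose proof (derivable_pt_lim_scal id c t 1 (derivable_pt_lim_id t)) as H.
    rewrite Rmult_1_r in H; exact H. }
  assert (Hexp : derivable_pt_lim (fun u => exp (c * u)) t (exp (c * t) * c)).
  { apply (derivable_pt_lim_comp (fun u => c * u) exp t c (exp (c * t)) Hlin).
    apply derivable_pt_lim_exp. }
  replace (exp (c * t) * (c * w t + l)) with (exp (c * t) * c * w t + exp (c * t) * l)
    by ring.
  exact (derivable_pt_lim_mult _ _ t _ _ Hexp Hw).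
Qed.

(* Gronwall: [exp (- c u) * w u] is nondecreasing. *)
Lemma exp_growth_of_derive_ge (w w' : R -> R) (c t : R) :
  0 <= t -> (forall u, 0 <= u <= t -> derivable_pt_lim w u (w' u)) ->
  (forall u, 0 < u < t -> c * w u <= w' u) -> exp (c * t) * w 0 <= w t.
Proof.
  intros Ht Hd Hge.
  assert (Hmono : exp (- c * 0) * w 0 <= exp (- c * t) * w t).
  { apply (le_of_derive_nonneg (fun u => exp (- c * u) * w u)
             (fun u => exp (- c * u) * (- c * w u + w' u)) 0 t Ht).
    - intros u Hu; exact (derivable_pt_lim_exp_mul (- c) w u (w' u) (Hd u Hu)).
    - intros u Hu; pose proof (exp_pos (- c * u)); pose proof (Hge u Hu); nra. }
  rewrite Rmult_0_r, exp_0, Rmult_1_l in Hmono.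
  assert (Hinv : exp (c * t) * exp (- c * t) = 1).
  { rewrite <- exp_plus; replace (c * t + - c * t) with 0 by ring; apply exp_0. }
  apply (Rmult_le_compat_l (exp (c * t))) in Hmono; [| left; apply exp_pos].
  rewrite <- Rmult_assoc, Hinv, Rmult_1_l in Hmono; exact Hmono.
Qed.

Lemma derivable_pt_lim_locally_null (f : R -> R) (a b t l : R) :
  a < t < b -> (forall z, a < z < b -> f z = 0) -> derivable_pt_lim f t l -> l = 0.
Proof.
  intros Ht Hf Hd.
  apply (uniqueness_limite (fct_cte 0) t); [| apply derivable_pt_lim_const].
  apply (derivable_pt_lim_locally_ext f _ t a b l Ht); [| exact Hd].
  intros z Hz; rewrite (Hf z Hz); reflexivity.
Qed.

Lemma rho1_seg (x : pt) (t : R) : rho1 (seg x t) = fst x t.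
Proof. unfold rho1, seg; simpl; rewrite Rplus_0_r; reflexivity. Qed.

Lemma rhom_seg (x : pt) (t : R) : rhom (seg x t) = Rmin (fst x t) (snd x t).
Proof. unfold rhom, seg; simpl; rewrite Rplus_0_r; reflexivity. Qed.

Section Solution.

Variables (h Rm mu M K : R) (q : R -> R) (j : pt -> R) (x : pt) (w' v' : R -> R).
Hypothesis hh : 0 < h.
Hypothesis HM : forall y, Rm < y -> Rabs (q y) <= M.
Hypothesis Hw : C1with (fun s => -h <= s) (fst x) w'.
Hypothesis Hv : C1with (fun s => -h <= s) (snd x) v'.
Hypothesis Hode : forall t, 0 < t ->
  w' t = q (snd x t) * fst x t /\ v' t = j (seg x t) - mu * snd x t.
Hypothesis Hseg : forall t, 0 <= t -> Xplus h Rm q j mu (seg x t).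

Lemma solution_nonneg (t : R) : 0 <= t -> 0 <= fst x t /\ 0 <= snd x t.
Proof.
  intros Ht; destruct (Hseg t Ht) as [_ [_ Hplus]].
  specialize (Hplus 0 ltac:(unfold Icl; lra)); simpl in Hplus.
  rewrite Rplus_0_r in Hplus; exact Hplus.
Qed.

Lemma solution_abs_fst_derive_le (t : R) : 0 < t -> Rabs (w' t) <= M * fst x t.
Proof.
  intros Ht; destruct (Hseg t (Rlt_le _ _ Ht)) as [[[_ HI] _] _].
  specialize (HI 0 ltac:(unfold Icl; lra)); simpl in HI; rewrite Rplus_0_r in HI.
  destruct (solution_nonneg t (Rlt_le _ _ Ht)) as [Hw0 _].
  rewrite (proj1 (Hode t Ht)), Rabs_mult, (Rabs_pos_eq (fst x t) Hw0).
  apply Rmult_le_compat_r; [exact Hw0 | exact (HM _ HI)].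
Qed.

Lemma solution_fst_zero_forever : fst x 0 = 0 -> forall t, 0 <= t -> fst x t = 0.
Proof.
  intros H0 t Ht.
  assert (Hgrowth : exp (M * t) * - fst x 0 <= - fst x t).
  { apply (exp_growth_of_derive_ge (fun u => - fst x u) (fun u => - w' u) M t Ht).
    - intros u Hu; apply derivable_pt_lim_opp.
      apply (C1with_derivable_pt_lim h); [exact Hw | lra].
    - intros u Hu; pose proof (solution_abs_fst_derive_le u (proj1 Hu)).
      pose proof (Rle_abs (w' u)); lra. }
  pose proof (solution_nonneg t Ht); rewrite H0 in Hgrowth; lra.
Qed.

Lemma solution_fst_pos_forever : 0 < fst x 0 -> forall t, 0 <= t -> 0 < fst x t.
Proof.
  intros H0 t Ht.
  assert (Hgrowth : exp (- M * t) * fst x 0 <= fst x t).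
  { apply (exp_growth_of_derive_ge (fst x) w' (- M) t Ht).
    - intros u Hu; apply (C1with_derivable_pt_lim h); [exact Hw | lra].
    - intros u Hu; pose proof (solution_abs_fst_derive_le u (proj1 Hu)).
      pose proof (Rle_abs (- w' u)); rewrite Rabs_Ropp in *; lra. }
  pose proof (exp_pos (- M * t)); nra.
Qed.

Lemma solution_j_zero_of_snd_zero :
  (forall t, 0 <= t -> snd x t = 0) -> forall t, 0 < t -> j (seg x t) = 0.
Proof.
  intros Hv0 t Ht.
  assert (Hv'0 : v' t = 0).
  { apply (derivable_pt_lim_locally_null (snd x) 0 (t + 1) t); [lra | |].
    - intros z Hz; apply Hv0; lra.
    - apply (C1with_derivable_pt_lim h); [exact Hv | lra]. }
  pose proof (proj2 (Hode t Ht)) as Hvt; rewrite Hv'0, (Hv0 t (Rlt_le _ _ Ht)) in Hvt; lra.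
Qed.

Lemma solution_fst_exp_growth_of_snd_zero :
  (forall t, 0 <= t -> snd x t = 0) -> forall t, 0 <= t -> exp (q 0 * t) * fst x 0 <= fst x t.
Proof.
  intros Hv0 t Ht.
  apply (exp_growth_of_derive_ge (fst x) w' (q 0) t Ht).
  - intros u Hu; apply (C1with_derivable_pt_lim h); [exact Hw | lra].
  - intros u Hu; rewrite (proj1 (Hode u (proj1 Hu))), (Hv0 u); lra.
Qed.

Hypothesis Hresp : respects h j.
Hypothesis hq0 : 0 < q 0.
Hypothesis HK : forall phi psi, Uplus h (phi, psi) ->
  (forall s, Icl h s -> K <= phi s) -> 0 < j (phi, fun _ => 0).

Lemma solution_min_not_always_zero :
  0 < fst x 0 -> ~ (forall t, 0 <= t -> Rmin (fst x t) (snd x t) = 0).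
Proof.
  intros Hw0 Hmin.
  assert (Hv0 : forall t, 0 <= t -> snd x t = 0).
  { intros t Ht; specialize (Hmin t Ht).
    pose proof (solution_fst_pos_forever Hw0 t Ht); pose proof (solution_nonneg t Ht).
    unfold Rmin in Hmin; destruct (Rle_dec (fst x t) (snd x t)); lra. }
  (* At [T], the delay interval [T - h, T] lies where [w >= q(0) w(0) (T - h) = |K|]. *)
  set (T := h + Rabs K / (q 0 * fst x 0)).
  assert (HT : q 0 * fst x 0 * (T - h) = Rabs K) by (unfold T; field; nra).
  assert (HTh : h <= T).
  { unfold T; pose proof (Rabs_pos K).
    assert (0 <= Rabs K / (q 0 * fst x 0)) 
      by (unfold Rdiv; apply Rmult_le_pos; [| left; apply Rinv_0_lt_compat]; nra).
    lra. }
  assert (HwK : forall s, Icl h s -> K <= fst (seg x T) s).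
  { intros s [Hs1 Hs2]; simpl.
    pose proof (solution_fst_exp_growth_of_snd_zero Hv0 (T + s) ltac:(lra)).
    pose proof (exp_ineq1_le (q 0 * (T + s))); pose proof (Rle_abs K).
    assert (0 < q 0 * fst x 0) by nra.
    assert (q 0 * fst x 0 * (T - h) <= q 0 * fst x 0 * (T + s)) by nra.
    nra. }
  assert (HjT : j (seg x T) = j (fst (seg x T), fun _ => 0)).
  { apply Hresp; intros s [Hs1 _]; simpl; split; [reflexivity | apply Hv0; lra]. }
  assert (Hplus : Uplus h (fst (seg x T), snd (seg x T))).
  { rewrite <- surjective_pairing; apply (Hseg T ltac:(lra)). }
  pose proof (HK _ _ Hplus HwK) as Hjpos.
  rewrite <- HjT, (solution_j_zero_of_snd_zero Hv0 T ltac:(lra)) in Hjpos; lra.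
Qed.

Variables (S : R -> pt -> pt) (p : pt).
Hypothesis Hp : Xplus h Rm q j mu p.
Hypothesis Hinit : fst x 0 = fst p 0.
Hypothesis Horbit : forall t, 0 <= t -> S t p = seg x t.

Lemma X0_rho1_iff :
  X0 h Rm q j mu S rho1 p <-> Xplus h Rm q j mu p /\ fst p 0 = 0.
Proof.
  split; intros [_ H0]; split; try exact Hp.
  - specialize (H0 0 (Rle_refl 0)).
    rewrite Horbit, rho1_seg, Hinit in H0 by lra; exact H0.
  - intros t Ht; rewrite Horbit, rho1_seg by exact Ht.
    apply solution_fst_zero_forever; [rewrite Hinit; exact H0 | exact Ht].
Qed.

Lemma X0_rhom_iff :
  X0 h Rm q j mu S rhom p <-> Xplus h Rm q j mu p /\ fst p 0 = 0.
Proof.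
  split; intros [_ H0]; split; try exact Hp.
  - rewrite <- Hinit.
    destruct (solution_nonneg 0 (Rle_refl 0)) as [[Hpos | Hzero] _]; [exfalso | congruence].
    apply (solution_min_not_always_zero Hpos).
    intros t Ht; rewrite <- rhom_seg, <- Horbit by exact Ht; apply H0, Ht.
  - intros t Ht; rewrite Horbit, rhom_seg by exact Ht.
    rewrite (solution_fst_zero_forever ltac:(rewrite Hinit; exact H0) t Ht).
    apply Rmin_left, solution_nonneg, Ht.
Qed.

End Solution.

Theorem lemma19 (h Rm mu : R) (q : R -> R) (j : pt -> R) (S : R -> pt -> pt)
  (hh : 0 < h) (hRm : Rm < 0) (hmu : 0 <= mu)
  (HH1 : H1 h Rm j) (HH2 : H2 Rm q)
  (HH3 : exists p, Xplus h Rm q j mu p)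
  (hpos : exists p, Xplus h Rm q j mu p /\ 0 < Rmin (fst p 0) (snd p 0))
  (hq0 : 0 < q 0) (hj0 : j pzero = 0)
  (hK : exists K, forall phi psi, Uplus h (phi, psi) ->
          (forall s, Icl h s -> K <= phi s) -> 0 < j (phi, fun _ => 0))
  (hS : is_semiflow h Rm q j mu S) :
  (forall p, X0 h Rm q j mu S rho1 p <-> (Xplus h Rm q j mu p /\ fst p 0 = 0)) /\
  (forall p, X0 h Rm q j mu S rhom p <-> (Xplus h Rm q j mu p /\ fst p 0 = 0)).
Proof.
  (* Besides the hypothesis on K and q(0) > 0, only the boundedness of q and the dependence of j on
     segments alone are needed; (H3), the positive state, j(0) = 0 and mu >= 0 are not. *)
  destruct HH1 as [Hresp _].
  destruct HH2 as [[M HM] _].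
  destruct hK as [K HK].
  assert (Hchar : forall p, Xplus h Rm q j mu p ->
    (X0 h Rm q j mu S rho1 p <-> Xplus h Rm q j mu p /\ fst p 0 = 0) /\
    (X0 h Rm q j mu S rhom p <-> Xplus h Rm q j mu p /\ fst p 0 = 0)).
  { intros p Hp.
    destruct (hS p Hp) as [x [[Hinit [[w' [v' [Hw [Hv Hode]]]] _]] [Hseg Horbit]]].
    assert (Hx0 : fst x 0 = fst p 0) by (apply (Hinit 0); unfold Icl; lra).
    split; [eapply X0_rho1_iff | eapply X0_rhom_iff]; eassumption. }
  split; intro p; split; intro Hx; destruct (Hchar p (proj1 Hx)); tauto.
Qed.
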